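(* Let $A\in\mathbb{R}^{n\times m}$ have distinct columns with $a_1=0$. The following are equivalent: (1) for every $c\in\mathbb{R}^m$, the signomial $f=\mathrm{Sig}(A,c)$ satisfies $f^\star=f_{\mathsf{SAGE}}$; (2) $C_{\mathrm{NNS}}(A)=C_{\mathrm{SAGE}}(A)$; (3) $\{v\in C_{\mathrm{SAGE}}(A)^\dagger: v_1=1\}\subset\mathrm{cl}\,\mathrm{conv}\,\exp\mathcal{R}(A^\top)$.
   Context: For $c\in\mathbb{R}^m$, $\mathrm{Sig}(A,c)$ denotes $x\mapsto\sum_{i=1}^m c_i\exp(a_i^\top x)$. $C_{\mathrm{NNS}}(A)=\{c:\mathrm{Sig}(A,c)(x)\ge 0\ \forall x\in\mathbb{R}^n\}$, $C_{\mathrm{AGE}}(A,k)=\{c\in C_{\mathrm{NNS}}(A): c_i\ge 0\ \forall i\ne k\}$, $C_{\mathrm{SAGE}}(A)=\sum_{k=1}^m C_{\mathrm{AGE}}(A,k)$. For $f=\mathrm{Sig}(A,c)$: $f^\star=\inf_{x}f(x)$ and $f_{\mathsf{SAGE}}=\sup\{\gamma\in\mathbb{R}: c-\gamma e_1\in C_{\mathrm{SAGE}}(A)\}$. $K^\dagger=\{y: y^\top x\ge 0\ \forall x\in K\}$ is the dual cone. $\mathcal{R}(A^\top)=\{A^\top x: x\in\mathbb{R}^n\}\subset\mathbb{R}^m$ is the range of $A^\top$, $\exp$ is applied entrywise to vectors and elementwise to sets, and $\mathrm{cl}\,\mathrm{conv}$ is the closed convex hull. *)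

From Stdlib Require Import Reals Lra Lia.
Open Scope R_scope.

(* Vectors in R^k are functions nat -> R; only entries with index < k matter.
   A matrix A in R^{n x m} is A : nat -> nat -> R, entry (i,j) = A i j,
   i < n, j < m; column j is a_j. Index 0 corresponds to the paper's index 1. *)

Fixpoint sumR (k : nat) (f : nat -> R) : R :=
  match k with
  | O => 0
  | S k' => sumR k' f + f k'
  end.

Definition colDot (n : nat) (A : nat -> nat -> R) (j : nat) (x : nat -> R) : R :=
  sumR n (fun i => A i j * x i).

Definition Sig (n m : nat) (A : nat -> nat -> R) (c : nat -> R) (x : nat -> R) : R :=
  sumR m (fun j => c j * exp (colDot n A j x)).

Definition C_NNS (n m : nat) (A : nat -> nat -> R) (c : nat -> R) : Prop :=
  forall x : nat -> R, 0 <= Sig n m A c x.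

Definition C_AGE (n m : nat) (A : nat -> nat -> R) (k : nat) (c : nat -> R) : Prop :=
  C_NNS n m A c /\ (forall i, (i < m)%nat -> i <> k -> 0 <= c i).

Definition C_SAGE (n m : nat) (A : nat -> nat -> R) (c : nat -> R) : Prop :=
  exists cs : nat -> nat -> R,
    (forall k, (k < m)%nat -> C_AGE n m A k (cs k)) /\
    (forall i, (i < m)%nat -> c i = sumR m (fun k => cs k i)).

Inductive ExtR : Type := Fin (r : R) | PInf | MInf.

Definition is_sup_ext (E : R -> Prop) (v : ExtR) : Prop :=
  match v with
  | Fin l => is_lub E l
  | PInf => forall M, exists x, E x /\ M < x
  | MInf => forall x, ~ E x
  end.

Definition is_inf_ext (E : R -> Prop) (v : ExtR) : Prop :=
  match v with
  | Fin l => (forall x, E x -> l <= x) /\ (forall b, (forall x, E x -> b <= x) -> b <= l)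
  | MInf => forall M, exists x, E x /\ x < M
  | PInf => forall x, ~ E x
  end.

Definition e1 (i : nat) : R := if Nat.eqb i 0 then 1 else 0.

Definition f_star_is (n m : nat) (A : nat -> nat -> R) (c : nat -> R) (v : ExtR) : Prop :=
  is_inf_ext (fun y => exists x, y = Sig n m A c x) v.

Definition f_SAGE_is (n m : nat) (A : nat -> nat -> R) (c : nat -> R) (v : ExtR) : Prop :=
  is_sup_ext (fun g => C_SAGE n m A (fun i => c i - g * e1 i)) v.

Definition C_SAGE_dual (n m : nat) (A : nat -> nat -> R) (v : nat -> R) : Prop :=
  forall c, C_SAGE n m A c -> 0 <= sumR m (fun i => v i * c i).

Definition conv_exp_range (n m : nat) (A : nat -> nat -> R) (w : nat -> R) : Prop :=
  exists (N : nat) (lam : nat -> R) (xs : nat -> nat -> R),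
    (forall k, (k < N)%nat -> 0 <= lam k) /\
    sumR N lam = 1 /\
    (forall j, (j < m)%nat -> w j = sumR N (fun k => lam k * exp (colDot n A j (xs k)))).

Definition cl_conv_exp_range (n m : nat) (A : nat -> nat -> R) (v : nat -> R) : Prop :=
  forall eps, 0 < eps ->
    exists w, conv_exp_range n m A w /\ (forall j, (j < m)%nat -> Rabs (v j - w j) < eps).

From Stdlib Require Import Reals Lra Lia List.
From Stdlib Require Import Classical ClassicalEpsilon ChoiceFacts FunctionalExtensionality.
Open Scope R_scope.

(* Because a_1 = 0, Sig(A, c - g e_1) = Sig(A, c) - g. Hence (2) gives (1) directly, and (1)
   gives (2) once the supremum defining f_SAGE is attained, i.e. once C_SAGE is closed.
   C_SAGE is the Minkowski sum of the closed AGE cones, and such a sum is closed when the family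
   is pointed. It is: with distinct columns, a nonnegative AGE signomial that vanishes
   identically has no positive coefficient c_i, since that term would dominate along a_i - a_k.
   For (2) <-> (3), C_NNS is the set of c pairing nonnegatively with conv exp R(A^T), and both
   directions are separation arguments in R^m, the separating hyperplane coming from the
   nearest point of a closed convex set. *)

Lemma sumR_ext k f g : (forall i, (i < k)%nat -> f i = g i) -> sumR k f = sumR k g.
Proof.
  induction k as [|k IH]; intros H; simpl; [reflexivity|].
  rewrite IH by (intros; apply H; lia). now rewrite H by lia.
Qed.

Lemma sumR_add k f g : sumR k (fun i => f i + g i) = sumR k f + sumR k g.
Proof. induction k; simpl; [|rewrite IHk]; ring. Qed.

Lemma sumR_sub k f g : sumR k (fun i => f i - g i) = sumR k f - sumR k g.
Proof. induction k; simpl; [|rewrite IHk]; ring. Qed.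

Lemma sumR_scal k a f : sumR k (fun i => a * f i) = a * sumR k f.
Proof. induction k; simpl; [|rewrite IHk]; ring. Qed.

Lemma sumR_0 k f : (forall i, (i < k)%nat -> f i = 0) -> sumR k f = 0.
Proof.
  induction k as [|k IH]; intros H; simpl; [reflexivity|].
  rewrite IH by (intros; apply H; lia). rewrite H by lia. ring.
Qed.

Lemma sumR_le k f g : (forall i, (i < k)%nat -> f i <= g i) -> sumR k f <= sumR k g.
Proof.
  induction k as [|k IH]; intros H; simpl; [lra|].
  pose proof (H k (Nat.lt_succ_diag_r k)).
  enough (sumR k f <= sumR k g) by lra.
  apply IH; intros; apply H; lia.
Qed.

Lemma sumR_ge0 k f : (forall i, (i < k)%nat -> 0 <= f i) -> 0 <= sumR k f.
Proof. intros H. rewrite <- (sumR_0 k (fun _ => 0)) by auto. now apply sumR_le. Qed.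

Lemma sumR_le_const k f e : (forall i, (i < k)%nat -> f i <= e) -> sumR k f <= INR k * e.
Proof.
  induction k as [|k IH]; intros H; cbn [sumR]; [simpl; lra|].
  rewrite S_INR. pose proof (H k (Nat.lt_succ_diag_r k)).
  enough (sumR k f <= INR k * e) by lra.
  apply IH; intros; apply H; lia.
Qed.

Lemma Rabs_sumR_le k f e :
  (forall i, (i < k)%nat -> Rabs (f i) <= e) -> Rabs (sumR k f) <= INR k * e.
Proof.
  intros H. apply Rle_trans with (sumR k (fun i => Rabs (f i))); [|now apply sumR_le_const].
  clear H. induction k; simpl; [rewrite Rabs_R0; lra|].
  eapply Rle_trans; [apply Rabs_triang|lra].
Qed.

Lemma sumR_term_le k f j :
  (forall i, (i < k)%nat -> 0 <= f i) -> (j < k)%nat -> f j <= sumR k f.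
Proof.
  induction k as [|k IH]; intros H Hj; [lia|simpl].
  assert (0 <= sumR k f) by (apply sumR_ge0; intros; apply H; lia).
  pose proof (H k (Nat.lt_succ_diag_r k)).
  destruct (Nat.eq_dec j k) as [->|Hne]; [lra|].
  enough (f j <= sumR k f) by lra.
  apply IH; [intros; apply H|]; lia.
Qed.

Lemma sumR_ge0_eq0 k f j :
  (forall i, (i < k)%nat -> 0 <= f i) -> sumR k f = 0 -> (j < k)%nat -> f j = 0.
Proof.
  intros H Hs Hj. pose proof (sumR_term_le k f j H Hj). pose proof (H j Hj). lra.
Qed.

Lemma sumR_comm a b f :
  sumR a (fun i => sumR b (fun j => f i j)) = sumR b (fun j => sumR a (fun i => f i j)).
Proof.
  induction a; simpl; [symmetry; now apply sumR_0|].
  rewrite IHa, <- sumR_add. reflexivity.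
Qed.

Lemma sumR_single k j f :
  (j < k)%nat -> (forall i, (i < k)%nat -> i <> j -> f i = 0) -> sumR k f = f j.
Proof.
  induction k as [|k IH]; intros Hj H; [lia|simpl].
  destruct (Nat.eq_dec j k) as [->|Hne].
  - rewrite sumR_0 by (intros; apply H; lia). ring.
  - rewrite IH; [rewrite (H k) by lia; ring | lia | intros; apply H; lia].
Qed.

Lemma sumR_delta k j a :
  (j < k)%nat -> sumR k (fun i => if Nat.eqb i j then a else 0) = a.
Proof.
  intros Hj. rewrite (sumR_single k j) by
    (auto; intros i _ Hij; now destruct (Nat.eqb_spec i j)).
  now rewrite Nat.eqb_refl.
Qed.

Lemma sumR_app a b f : sumR (a + b) f = sumR a f + sumR b (fun k => f (a + k)%nat).
Proof.
  induction b; simpl; [rewrite Nat.add_0_r; ring|].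
  rewrite Nat.add_succ_r; simpl; rewrite IHb; ring.
Qed.

Lemma Rabs_lt_iff x a : Rabs x < a <-> -a < x < a.
Proof. unfold Rabs; destruct (Rcase_abs x); split; intros; lra. Qed.

Lemma Rabs_le_iff x a : Rabs x <= a <-> -a <= x <= a.
Proof. unfold Rabs; destruct (Rcase_abs x); split; intros; lra. Qed.

Lemma approx_ge0 a E : 0 <= E -> (forall eps, 0 < eps -> - eps * E <= a) -> 0 <= a.
Proof.
  intros HE H. destruct (Rle_lt_dec 0 a) as [|Ha]; [assumption|exfalso].
  assert (Heps : 0 < - a / (2 * (E + 1))) by (apply Rdiv_lt_0_compat; lra).
  specialize (H _ Heps).
  assert (- a / (2 * (E + 1)) * E <= - a / (2 * (E + 1)) * (E + 1))
    by (apply Rmult_le_compat_l; lra).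
  replace (- a / (2 * (E + 1)) * (E + 1)) with (- a / 2) in * by (field; lra).
  lra.
Qed.

Lemma approx_eq0 a : (forall eps, 0 < eps -> Rabs a < eps) -> a = 0.
Proof.
  intros H. destruct (Req_dec a 0) as [|Ha]; [assumption|exfalso].
  specialize (H (Rabs a) (Rabs_pos_lt a Ha)). lra.
Qed.

Lemma INR_inv_small eps : 0 < eps -> exists J, forall j, (J <= j)%nat -> / (INR j + 1) < eps.
Proof.
  intros He. destruct (INR_unbounded (/ eps)) as [J HJ]. exists J. intros j Hj.
  apply le_INR in Hj. pose proof (pos_INR J). pose proof (Rinv_0_lt_compat _ He).
  rewrite <- (Rinv_inv eps). apply Rinv_lt_contravar; [apply Rmult_lt_0_compat|]; lra.
Qed.

Lemma INR_inv_le_1 a : / (INR a + 1) <= 1.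
Proof. pose proof (pos_INR a). rewrite <- Rinv_1. apply Rinv_le_contravar; lra. Qed.

Definition fun_choice : FunctionalChoice :=
  constructive_indefinite_descr_fun_choice constructive_indefinite_description.

Definition strict_incr (phi : nat -> nat) : Prop := forall j, (phi j < phi (S j))%nat.

Lemma strict_incr_mono phi : strict_incr phi -> forall i j, (i <= j)%nat -> (phi i <= phi j)%nat.
Proof. intros H i j Hij. induction Hij as [|j _ IH]; [lia|]. specialize (H j). lia. Qed.

Lemma strict_incr_ge phi : strict_incr phi -> forall j, (j <= phi j)%nat.
Proof. intros H j. induction j; [lia|]. specialize (H j). lia. Qed.

Lemma strict_incr_comp phi psi :
  strict_incr phi -> strict_incr psi -> strict_incr (fun j => phi (psi j)).
Proof.
  intros Hphi Hpsi j. specialize (Hpsi j).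
  pose proof (strict_incr_mono phi Hphi (S (psi j)) (psi (S j)) Hpsi).
  specialize (Hphi (psi j)). lia.
Qed.

Lemma extract_subsequence (P : nat -> nat -> Prop) :
  (forall N k, exists p, (N <= p)%nat /\ P p k) ->
  exists phi, strict_incr phi /\ forall j, P (phi j) j.
Proof.
  intros H. destruct (fun_choice (nat * nat) nat (fun Nk p => (fst Nk <= p)%nat /\ P p (snd Nk)))
    as [g Hg]; [intros [N k]; apply H|].
  set (phi := fix phi j := match j with O => g (O, O) | S j' => g (S (phi j'), S j') end).
  exists phi. split.
  - intros j. exact (proj1 (Hg (S (phi j), S j))).
  - intros [|j]; apply (Hg (_, _)).
Qed.

Definition converges_on {T : Type} (L : list T) (u : nat -> T -> R) (p : T -> R) : Prop :=
  forall eps, 0 < eps -> exists J, forall j, (J <= j)%nat ->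
    forall x, In x L -> Rabs (u j x - p x) < eps.

Lemma converges_on_subseq {T : Type} (L : list T) u p psi :
  strict_incr psi -> converges_on L u p -> converges_on L (fun j => u (psi j)) p.
Proof.
  intros Hpsi H eps He. destruct (H eps He) as [J HJ]. exists J. intros j Hj.
  apply HJ. pose proof (strict_incr_ge psi Hpsi j). lia.
Qed.

Lemma Bolzano_Weierstrass_R (v : nat -> R) (B : R) : (forall j, Rabs (v j) <= B) ->
  exists psi l, strict_incr psi /\
    forall eps, 0 < eps -> exists J, forall j, (J <= j)%nat -> Rabs (v (psi j) - l) < eps.
Proof.
  intros HB.
  destruct (Bolzano_Weierstrass v (fun c => -B <= c <= B) (compact_P3 _ _)) as [l Hl].
  { intros j. now apply Rabs_le_iff. }
  destruct (extract_subsequence (fun p k => Rabs (v p - l) < / (INR k + 1))) as [psi [Hpsi Hv]].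
  { intros N k. destruct (Hl (disc l (mkposreal _ (RinvN_pos k))) N) as [p Hp]; [|now exists p].
    exists (mkposreal _ (RinvN_pos k)). intros x Hx. exact Hx. }
  exists psi, l. split; [assumption|].
  intros eps He. destruct (INR_inv_small eps He) as [J HJ]. exists J.
  intros j Hj. specialize (Hv j). specialize (HJ j Hj). lra.
Qed.

Lemma Bolzano_Weierstrass_list {T : Type} (L : list T) (u : nat -> T -> R) (B : R) :
  (forall j x, In x L -> Rabs (u j x) <= B) ->
  exists phi p, strict_incr phi /\ converges_on L (fun j => u (phi j)) p.
Proof.
  induction L as [|a L IH]; intros HB.
  - exists (fun j => j), (fun _ => 0). split; [intros j; lia|].
    intros eps He. exists O. intros j _ x [].
  - destruct IH as [phi [p [Hphi Hconv]]]; [intros j x Hx; apply HB; now right|].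
    destruct (Bolzano_Weierstrass_R (fun j => u (phi j) a) B) as [psi [l [Hpsi Hl]]].
    { intros j. apply HB. now left. }
    exists (fun j => phi (psi j)), (fun x => if excluded_middle_informative (x = a) then l else p x).
    split; [now apply strict_incr_comp|].
    intros eps He.
    destruct (converges_on_subseq L _ p psi Hpsi Hconv eps He) as [J1 HJ1].
    destruct (Hl eps He) as [J2 HJ2].
    exists (Nat.max J1 J2). intros j Hj x Hx.
    destruct (excluded_middle_informative (x = a)) as [->|Hne].
    + apply HJ2. lia.
    + destruct Hx as [Hx|Hx]; [congruence|]. apply HJ1; [lia|assumption].
Qed.

Lemma glb_exists (E : R -> Prop) :
  (exists x, E x) -> (exists b, forall x, E x -> b <= x) ->
  exists l, (forall x, E x -> l <= x) /\ (forall b, (forall x, E x -> b <= x) -> b <= l).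
Proof.
  intros [x0 Hx0] [b Hb].
  destruct (completeness (fun r => E (- r))) as [u [Hu1 Hu2]].
  - exists (- b). intros r Hr. specialize (Hb _ Hr). lra.
  - exists (- x0). now rewrite Ropp_involutive.
  - exists (- u). split.
    + intros x Hx. enough (- x <= u) by lra. apply Hu1. now rewrite Ropp_involutive.
    + intros b' Hb'. enough (u <= - b') by lra. apply Hu2. intros r Hr. specialize (Hb' _ Hr). lra.
Qed.

Lemma lub_approx (E : R -> Prop) l eps : is_lub E l -> 0 < eps -> exists g, E g /\ l - eps < g.
Proof.
  intros [_ Hl] He. apply NNPP. intros Hno.
  enough (l <= l - eps) by lra. apply Hl. intros g Hg. apply Rnot_lt_le. intros Hlt.
  apply Hno. now exists g.
Qed.

(** * Separation in R^m *)

Definition dot (m : nat) (u v : nat -> R) : R := sumR m (fun i => u i * v i).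

Definition closed_set (m : nat) (K : (nat -> R) -> Prop) : Prop :=
  forall c,
    (forall eps, 0 < eps -> exists w, K w /\ forall i, (i < m)%nat -> Rabs (c i - w i) < eps) ->
    K c.

Definition convex_set (K : (nat -> R) -> Prop) : Prop :=
  forall u w t, K u -> K w -> 0 <= t <= 1 -> K (fun i => (1 - t) * u i + t * w i).

Definition cone (K : (nat -> R) -> Prop) : Prop :=
  forall a c, 0 <= a -> K c -> K (fun i => a * c i).

Lemma dot_scal_r m y a u : dot m y (fun i => a * u i) = a * dot m y u.
Proof. unfold dot. rewrite <- sumR_scal. apply sumR_ext; intros; ring. Qed.

Lemma dot_self_ge0 m u : 0 <= dot m u u.
Proof. apply sumR_ge0. intros. nra. Qed.

Lemma dot_self_coord m u i : (i < m)%nat -> u i * u i <= dot m u u.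
Proof. apply (sumR_term_le m (fun i => u i * u i)). intros. nra. Qed.

Lemma dot_self_close m a b e : 0 <= e <= 1 -> (forall i, (i < m)%nat -> Rabs (a i - b i) <= e) ->
  dot m a a <= dot m b b + e * sumR m (fun i => 2 * Rabs (a i) + 1).
Proof.
  intros He H. unfold dot. rewrite <- sumR_scal, <- sumR_add. apply sumR_le. intros i Hi.
  specialize (H i Hi).
  assert (Hab : Rabs (a i + b i) <= 2 * Rabs (a i) + 1).
  { replace (a i + b i) with (2 * a i - (a i - b i)) by ring.
    eapply Rle_trans; [apply Rabs_triang|].
    rewrite Rabs_Ropp, Rabs_mult, (Rabs_pos_eq 2) by lra. lra. }
  assert (a i * a i - b i * b i <= Rabs (a i - b i) * Rabs (a i + b i)).
  { rewrite <- Rabs_mult. replace (a i * a i - b i * b i) with ((a i - b i) * (a i + b i)) by ring.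
    apply Rle_abs. }
  assert (Rabs (a i - b i) * Rabs (a i + b i) <= e * (2 * Rabs (a i) + 1))
    by (apply Rmult_le_compat; auto using Rabs_pos).
  lra.
Qed.

Definition sqdist (m : nat) (p w : nat -> R) : R := dot m (fun i => p i - w i) (fun i => p i - w i).

Lemma Rabs_le_1_plus_sq x : Rabs x <= 1 + x * x.
Proof.
  assert (x * x = Rabs x * Rabs x) by (rewrite <- Rabs_mult; symmetry; apply Rabs_pos_eq; nra).
  pose proof (Rabs_pos x). nra.
Qed.

Lemma Rabs_coord_le_sqdist m p w i : (i < m)%nat ->
  Rabs (w i) <= sumR m (fun i => Rabs (p i)) + 1 + sqdist m p w.
Proof.
  intros Hi. pose proof (dot_self_coord m (fun i => p i - w i) i Hi) as Hc. cbv beta in Hc.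
  pose proof (sumR_term_le m (fun i => Rabs (p i)) i (fun _ _ => Rabs_pos _) Hi).
  pose proof (Rabs_le_1_plus_sq (p i - w i)).
  pose proof (Rabs_triang_inv (w i) (- (p i - w i))).
  rewrite Rabs_Ropp in *. replace (w i - - (p i - w i)) with (p i) in * by ring.
  unfold sqdist. lra.
Qed.

Lemma sqdist_le_of_limit m p W q phi d :
  strict_incr phi -> converges_on (seq 0 m) (fun j => W (phi j)) q ->
  (forall j, sqdist m p (W j) < d + / (INR j + 1)) -> sqdist m p q <= d.
Proof.
  intros Hphi Hq HW. apply Rnot_lt_le. intros Hlt. set (eta := sqdist m p q - d).
  assert (Heta : 0 < eta) by (unfold eta; lra).
  set (M := sumR m (fun i => 2 * Rabs (p i - q i) + 1)).
  assert (HM : 0 <= M) by (apply sumR_ge0; intros i _; pose proof (Rabs_pos (p i - q i)); lra).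
  set (e := Rmin 1 (eta / (2 * (M + 1)))).
  assert (He : 0 < e) by (apply Rmin_glb_lt; [lra|apply Rdiv_lt_0_compat; lra]).
  assert (HeM : e * M <= eta / 2).
  { apply Rle_trans with (eta / (2 * (M + 1)) * M); [apply Rmult_le_compat_r; auto; apply Rmin_r|].
    apply (Rmult_le_reg_r (2 * (M + 1))); [lra|]. field_simplify; nra. }
  destruct (INR_inv_small (eta / 2)) as [J1 HJ1]; [lra|].
  destruct (Hq e He) as [J2 HJ2].
  set (j := Nat.max J1 J2).
  assert (sqdist m p q <= sqdist m p (W (phi j)) + e * M).
  { apply (dot_self_close m (fun i => p i - q i) (fun i => p i - W (phi j) i) e).
    - split; [lra|apply Rmin_l].
    - intros i Hi. replace (p i - q i - (p i - W (phi j) i)) with (W (phi j) i - q i) by ring.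
      left. apply HJ2; [unfold j; lia|apply in_seq; lia]. }
  pose proof (strict_incr_ge phi Hphi j).
  assert (/ (INR (phi j) + 1) < eta / 2) by (apply HJ1; unfold j in *; lia).
  specialize (HW (phi j)). unfold eta in *. lra.
Qed.

Section Separation.
Variables (m : nat) (K : (nat -> R) -> Prop).
Hypotheses (K_closed : closed_set m K) (K_convex : convex_set K).

(* A minimizing sequence is bounded, so by compactness a subsequence converges. *)
Lemma nearest_point_exists p w0 : K w0 ->
  exists q, K q /\ forall w, K w -> sqdist m p q <= sqdist m p w.
Proof.
  intros Hw0.
  destruct (glb_exists (fun r => exists w, K w /\ r = sqdist m p w)) as [d [Hd1 Hd2]].
  { now exists (sqdist m p w0), w0. }
  { exists 0. intros r [w [_ ->]]. apply dot_self_ge0. }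
  assert (Hd : forall w, K w -> d <= sqdist m p w) by (intros w Hw; apply Hd1; now exists w).
  assert (Hmin : forall j : nat, exists w, K w /\ sqdist m p w < d + / (INR j + 1)).
  { intros j. apply NNPP. intros Hno.
    enough (d + / (INR j + 1) <= d) by (pose proof (RinvN_pos j); lra).
    apply Hd2. intros r [w [Hw ->]]. apply Rnot_lt_le. intros Hlt. apply Hno. now exists w. }
  destruct (fun_choice _ _ _ Hmin) as [W HW].
  assert (Hbound : forall j i, In i (seq 0 m) ->
    Rabs (W j i) <= sumR m (fun i => Rabs (p i)) + d + 2).
  { intros j i Hi. apply in_seq in Hi.
    pose proof (Rabs_coord_le_sqdist m p (W j) i ltac:(lia)).
    pose proof (proj2 (HW j)). pose proof (INR_inv_le_1 j). lra. }
  destruct (Bolzano_Weierstrass_list (seq 0 m) W _ Hbound) as [phi [q [Hphi Hq]]].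
  exists q. split.
  - apply K_closed. intros e He. destruct (Hq e He) as [J HJ]. exists (W (phi J)).
    split; [apply HW|]. intros i Hi. rewrite Rabs_minus_sym. apply HJ; [lia|apply in_seq; lia].
  - intros w Hw. apply Rle_trans with d; [|now apply Hd].
    apply (sqdist_le_of_limit m p W q phi d Hphi Hq). intros j. apply HW.
Qed.

Lemma nearest_point_obtuse p q : K q -> (forall w, K w -> sqdist m p q <= sqdist m p w) ->
  forall w, K w -> dot m (fun i => p i - q i) (fun i => w i - q i) <= 0.
Proof.
  intros Hq Hnear w Hw.
  set (D := dot m (fun i => p i - q i) (fun i => w i - q i)).
  set (N := sqdist m w q). assert (HN : 0 <= N) by apply dot_self_ge0.
  assert (Hsmall : forall t, 0 < t <= 1 -> 2 * D <= t * N).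
  { intros t Ht. pose proof (Hnear _ (K_convex _ _ t Hq Hw ltac:(lra))) as Hz.
    assert (sqdist m p (fun i => (1 - t) * q i + t * w i) = sqdist m p q - 2 * t * D + t ^ 2 * N).
    { unfold D, N, sqdist, dot. rewrite <- !sumR_scal, <- sumR_sub, <- sumR_add.
      apply sumR_ext. intros; ring. }
    assert (t * (2 * D) <= t * (t * N)) by nra.
    apply Rmult_le_reg_l in H0; lra. }
  apply Rnot_lt_le. intros HD.
  set (t := Rmin 1 (D / (N + 1))).
  assert (0 < t) by (apply Rmin_glb_lt; [lra|apply Rdiv_lt_0_compat; lra]).
  specialize (Hsmall t ltac:(split; [lra|apply Rmin_l])).
  assert (t * N <= D / (N + 1) * N) by (apply Rmult_le_compat_r; [lra|apply Rmin_r]).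
  assert (D / (N + 1) * N < D) by (apply (Rmult_lt_reg_r (N + 1)); [lra|field_simplify; lra]).
  lra.
Qed.

Theorem separation p : (exists w, K w) -> ~ K p ->
  exists y d, 0 < d /\ forall w, K w -> dot m y p + d <= dot m y w.
Proof.
  intros [w0 Hw0] Hp.
  destruct (nearest_point_exists p w0 Hw0) as [q [Hq Hnear]].
  exists (fun i => q i - p i), (sqdist m p q). split.
  - destruct (dot_self_ge0 m (fun i => p i - q i)) as [|Hz]; [assumption|exfalso].
    apply Hp, K_closed. intros e He. exists q. split; [assumption|]. intros i Hi.
    assert (Hpq : (p i - q i) * (p i - q i) = 0).
    { apply (sumR_ge0_eq0 m (fun i => (p i - q i) * (p i - q i)));
        [intros k _; apply Rle_0_sqr|now symmetry|assumption]. }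
    assert (p i - q i = 0) as -> by nra. now rewrite Rabs_R0.
  - intros w Hw. pose proof (nearest_point_obtuse p q Hq Hnear w Hw).
    enough (dot m (fun i => q i - p i) w - dot m (fun i => q i - p i) p =
      sqdist m p q - dot m (fun i => p i - q i) (fun i => w i - q i)) by lra.
    unfold sqdist, dot. rewrite <- !sumR_sub. apply sumR_ext. intros; ring.
Qed.

Corollary cone_separation p : cone K -> (exists w, K w) -> ~ K p ->
  exists y, (forall w, K w -> 0 <= dot m y w) /\ dot m y p < 0.
Proof.
  intros Hcone Hne Hp. destruct (separation p Hne Hp) as [y [d [Hd Hsep]]].
  assert (Hyp : dot m y p + d <= 0).
  { destruct Hne as [w0 Hw0]. specialize (Hsep _ (Hcone 0 w0 (Rle_refl 0) Hw0)).
    now rewrite dot_scal_r, Rmult_0_l in Hsep. }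
  exists y. split; [|lra]. intros w Hw. apply Rnot_lt_le. intros Hneg.
  set (a := (- dot m y p) / (- dot m y w)).
  assert (Ha : 0 < a) by (apply Rdiv_lt_0_compat; lra).
  specialize (Hsep _ (Hcone a w (Rlt_le _ _ Ha) Hw)). rewrite dot_scal_r in Hsep.
  replace (a * dot m y w) with (dot m y p) in Hsep by (unfold a; field; lra). lra.
Qed.

End Separation.

(** * Closed Minkowski sums of cones *)

Definition msum (p m : nat) (K : nat -> (nat -> R) -> Prop) (c : nat -> R) : Prop :=
  exists cs : nat -> nat -> R,
    (forall k, (k < p)%nat -> K k (cs k)) /\
    (forall i, (i < m)%nat -> c i = sumR p (fun k => cs k i)).

Definition pointed_family (p m : nat) (K : nat -> (nat -> R) -> Prop) : Prop :=
  forall cs : nat -> nat -> R, (forall k, (k < p)%nat -> K k (cs k)) ->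
  (forall i, (i < m)%nat -> sumR p (fun k => cs k i) = 0) ->
  forall k i, (k < p)%nat -> (i < m)%nat -> cs k i = 0.

Section MinkowskiSum.
Variables (p m : nat) (K : nat -> (nat -> R) -> Prop).

Lemma msum_single k c : (k < p)%nat -> (forall k', (k' < p)%nat -> K k' (fun _ => 0)) ->
  K k c -> msum p m K c.
Proof.
  intros Hk H0 Hc. exists (fun k' => if Nat.eqb k' k then c else fun _ => 0). split.
  - intros k' Hk'. destruct (Nat.eqb_spec k' k) as [->|]; auto.
  - intros i Hi. rewrite (sumR_single p k) by
      (auto; intros k' _ Hne; now destruct (Nat.eqb_spec k' k)).
    now rewrite Nat.eqb_refl.
Qed.

Lemma msum_add c d : (forall k u w, (k < p)%nat -> K k u -> K k w -> K k (fun i => u i + w i)) ->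
  msum p m K c -> msum p m K d -> msum p m K (fun i => c i + d i).
Proof.
  intros Hadd [cs [Hcs Hc]] [ds [Hds Hd]]. exists (fun k i => cs k i + ds k i). split.
  - intros k Hk. now apply Hadd; [|apply Hcs|apply Hds].
  - intros i Hi. now rewrite sumR_add, <- Hc, <- Hd.
Qed.

Lemma msum_cone : (forall k, (k < p)%nat -> cone (K k)) -> cone (msum p m K).
Proof.
  intros Hcone a c Ha [cs [Hcs Hc]]. exists (fun k i => a * cs k i). split.
  - intros k Hk. now apply Hcone, Hcs.
  - intros i Hi. now rewrite sumR_scal, <- Hc.
Qed.

Definition normalizer (X : nat -> nat -> nat -> R) (t : nat) : R :=
  1 + sumR p (fun k => sumR m (fun i => Rabs (X t k i))).

Lemma normalizer_ge1 X t : 1 <= normalizer X t.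
Proof.
  enough (0 <= sumR p (fun k => sumR m (fun i => Rabs (X t k i)))) by (unfold normalizer; lra).
  apply sumR_ge0. intros. apply sumR_ge0. intros. apply Rabs_pos.
Qed.

Lemma inv_normalizer_bounds X t : 0 < / normalizer X t <= 1.
Proof.
  pose proof (normalizer_ge1 X t). split; [apply Rinv_0_lt_compat; lra|].
  rewrite <- Rinv_1. apply Rinv_le_contravar; lra.
Qed.

Lemma Rabs_entry_le_normalizer X t k i : (k < p)%nat -> (i < m)%nat ->
  Rabs (X t k i) <= normalizer X t.
Proof.
  intros Hk Hi.
  enough (Rabs (X t k i) <= sumR p (fun k => sumR m (fun i => Rabs (X t k i))))
    by (unfold normalizer; lra).
  eapply Rle_trans; [|apply (sumR_term_le p _ k)].
  - apply (sumR_term_le m (fun i => Rabs (X t k i))); [intros; apply Rabs_pos|assumption].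
  - intros; apply sumR_ge0; intros; apply Rabs_pos.
  - assumption.
Qed.

Definition normalized_limit (X : nat -> nat -> nat -> R) (phi : nat -> nat)
    (Y : nat -> nat -> R) (s : R) : Prop :=
  strict_incr phi /\
  forall eps, 0 < eps -> exists J, forall j, (J <= j)%nat ->
    (forall k i, (k < p)%nat -> (i < m)%nat ->
       Rabs (/ normalizer X (phi j) * X (phi j) k i - Y k i) < eps) /\
    Rabs (/ normalizer X (phi j) - s) < eps.

Lemma normalized_limit_exists X : exists phi Y s, normalized_limit X phi Y s.
Proof.
  (* [None] carries the scale [/ normalizer X t], [Some (k, i)] the normalised entries. *)
  set (u t (o : option (nat * nat)) :=
    match o with None => / normalizer X t | Some (k, i) => / normalizer X t * X t k i end).
  set (L := None :: map Some (list_prod (seq 0 p) (seq 0 m))).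
  assert (HL : forall k i, (k < p)%nat -> (i < m)%nat -> In (Some (k, i)) L).
  { intros k i Hk Hi. right. apply in_map, in_prod; apply in_seq; lia. }
  assert (Hbound : forall t o, In o L -> Rabs (u t o) <= 1).
  { intros t [[k i]|] Ho; simpl; pose proof (normalizer_ge1 X t) as Hnu;
      pose proof (inv_normalizer_bounds X t) as Hinv.
    - destruct Ho as [|Ho]; [discriminate|].
      apply in_map_iff in Ho as [[k' i'] [[= -> ->] Hki]]. apply in_prod_iff in Hki as [Hk Hi].
      apply in_seq in Hk, Hi. pose proof (Rabs_entry_le_normalizer X t k i ltac:(lia) ltac:(lia)).
      rewrite Rabs_mult, (Rabs_pos_eq (/ normalizer X t)) by lra.
      apply Rmult_le_reg_l with (normalizer X t); [lra|].
      rewrite <- Rmult_assoc, Rinv_r, Rmult_1_l, Rmult_1_r; lra.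
    - rewrite Rabs_pos_eq; lra. }
  destruct (Bolzano_Weierstrass_list L u 1 Hbound) as [phi [P [Hphi HP]]].
  exists phi, (fun k i => P (Some (k, i))), (P None). split; [assumption|].
  intros eps He. destruct (HP eps He) as [J HJ]. exists J. intros j Hj. split.
  - intros k i Hk Hi. exact (HJ j Hj (Some (k, i)) (HL k i Hk Hi)).
  - exact (HJ j Hj None (or_introl eq_refl)).
Qed.

Section NormalizedLimit.
(* [X t] decomposes an approximation of [c] into members of the [K k]; pointedness will
   rule out the limit scale [s = 0], and for [s > 0] the limit [Y / s] decomposes [c]. *)
Variables (c : nat -> R) (X : nat -> nat -> nat -> R) (phi : nat -> nat)
  (Y : nat -> nat -> R) (s : R).
Hypothesis X_in_K : forall t k, (k < p)%nat -> K k (X t k).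
Hypothesis X_approx :
  forall t i, (i < m)%nat -> Rabs (c i - sumR p (fun k => X t k i)) < / (INR t + 1).

Hypothesis Y_limit : normalized_limit X phi Y s.

Hypothesis K_closed : forall k, (k < p)%nat -> closed_set m (K k).
Hypothesis K_cone : forall k, (k < p)%nat -> cone (K k).

Lemma normalized_limit_in_K k : (k < p)%nat -> K k (Y k).
Proof.
  intros Hk. apply K_closed; [assumption|]. intros eps He.
  destruct (proj2 Y_limit eps He) as [J HJ].
  exists (fun i => / normalizer X (phi J) * X (phi J) k i). split.
  - apply K_cone; [assumption|left; apply inv_normalizer_bounds|auto].
  - intros i Hi. rewrite Rabs_minus_sym. now apply HJ.
Qed.

Lemma normalized_limit_sum i : (i < m)%nat -> sumR p (fun k => Y k i) = s * c i.
Proof.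
  intros Hi. apply Rminus_diag_uniq, approx_eq0. intros eps He.
  set (e := eps / (INR p + 1 + Rabs (c i))).
  assert (Hden : 0 < INR p + 1 + Rabs (c i))
    by (pose proof (pos_INR p); pose proof (Rabs_pos (c i)); lra).
  assert (Hee : e * (INR p + 1 + Rabs (c i)) = eps) by (unfold e; field; lra).
  assert (He' : 0 < e) by (apply Rdiv_lt_0_compat; lra).
  destruct (proj2 Y_limit e He') as [J1 HJ1]. destruct (INR_inv_small e He') as [J2 HJ2].
  set (j := Nat.max J1 J2). destruct (HJ1 j ltac:(unfold j; lia)) as [HZ Hs].
  set (a := / normalizer X (phi j)).
  pose proof (inv_normalizer_bounds X (phi j)) as Ha. fold a in Ha, HZ, Hs.
  assert (H1 : Rabs (sumR p (fun k => Y k i - a * X (phi j) k i)) <= INR p * e).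
  { apply Rabs_sumR_le. intros k Hk. rewrite Rabs_minus_sym. left. now apply HZ. }
  assert (H2 : Rabs (a * (sumR p (fun k => X (phi j) k i) - c i)) < e).
  { rewrite Rabs_mult, Rabs_minus_sym, (Rabs_pos_eq a) by lra.
    apply Rle_lt_trans with (1 * / (INR (phi j) + 1)).
    - apply Rmult_le_compat; try lra; [apply Rabs_pos|left; now apply X_approx].
    - rewrite Rmult_1_l. apply HJ2.
      pose proof (strict_incr_ge phi (proj1 Y_limit) j). unfold j in *; lia. }
  assert (H3 : Rabs ((a - s) * c i) <= e * Rabs (c i)).
  { rewrite Rabs_mult. apply Rmult_le_compat_r; [apply Rabs_pos|lra]. }
  rewrite sumR_sub, sumR_scal in H1.
  apply Rabs_le_iff in H1. apply Rabs_lt_iff in H2. apply Rabs_le_iff in H3. apply Rabs_lt_iff.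
  nra.
Qed.

Lemma normalized_limit_scale_ge0 : 0 <= s.
Proof.
  apply (approx_ge0 s 1); [lra|]. intros eps He. destruct (proj2 Y_limit eps He) as [J HJ].
  destruct (HJ J (Nat.le_refl J)) as [_ Hs]. pose proof (inv_normalizer_bounds X (phi J)).
  apply Rabs_lt_iff in Hs. lra.
Qed.

(* Normalisation makes the total mass of [/ normalizer X t * X t] plus [/ normalizer X t]
   equal to [1], so the limit cannot vanish altogether. *)
Lemma normalized_limit_nontrivial : s = 0 ->
  ~ (forall k i, (k < p)%nat -> (i < m)%nat -> Y k i = 0).
Proof.
  intros Hs0 HY0. set (eps := / (INR p * INR m + 1)).
  assert (Hpm : 0 <= INR p * INR m) by (apply Rmult_le_pos; apply pos_INR).
  assert (He : 0 < eps) by (apply Rinv_0_lt_compat; lra).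
  destruct (proj2 Y_limit eps He) as [J HJ]. destruct (HJ J (Nat.le_refl J)) as [HZ Hs].
  set (t := phi J). fold t in HZ, Hs. rewrite Hs0, Rminus_0_r in Hs.
  pose proof (normalizer_ge1 X t).
  set (mass := sumR p (fun k => sumR m (fun i => Rabs (/ normalizer X t * X t k i)))).
  assert (Hmass : mass + / normalizer X t = 1).
  { unfold mass. rewrite (sumR_ext p _ (fun k => / normalizer X t * sumR m (fun i => Rabs (X t k i)))).
    - rewrite sumR_scal. unfold normalizer in *. field. lra.
    - intros k Hk. rewrite <- sumR_scal. apply sumR_ext. intros i Hi.
      rewrite Rabs_mult, Rabs_pos_eq; [reflexivity|left; apply inv_normalizer_bounds]. }
  assert (Hsmall : mass <= INR p * (INR m * eps)).
  { unfold mass. apply sumR_le_const. intros k Hk. apply sumR_le_const. intros i Hi. left.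
    rewrite <- (Rminus_0_r (_ * _)), <- (HY0 k i Hk Hi). now apply HZ. }
  assert (INR p * (INR m * eps) + eps = 1) by (unfold eps; field; lra).
  rewrite Rabs_pos_eq in Hs by (left; apply inv_normalizer_bounds). lra.
Qed.

End NormalizedLimit.

Theorem msum_closed :
  (forall k, (k < p)%nat -> closed_set m (K k)) -> (forall k, (k < p)%nat -> cone (K k)) ->
  pointed_family p m K -> closed_set m (msum p m K).
Proof.
  intros Hcl Hcone Hpt c Happ.
  assert (Hseq : forall t : nat, exists Xt : nat -> nat -> R,
    (forall k, (k < p)%nat -> K k (Xt k)) /\
    forall i, (i < m)%nat -> Rabs (c i - sumR p (fun k => Xt k i)) < / (INR t + 1)).
  { intros t. destruct (Happ _ (RinvN_pos t)) as [w [[cs [Hcs Hw]] Hcw]].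
    exists cs. split; [assumption|]. intros i Hi. rewrite <- Hw; auto. }
  destruct (fun_choice _ _ _ Hseq) as [X HX].
  destruct (normalized_limit_exists X) as [phi [Y [s HY]]].
  assert (HXK : forall t k, (k < p)%nat -> K k (X t k)) by (intros t; apply HX).
  assert (HXc : forall t i, (i < m)%nat -> Rabs (c i - sumR p (fun k => X t k i)) < / (INR t + 1))
    by (intros t; apply HX).
  assert (HYK : forall k, (k < p)%nat -> K k (Y k))
    by (intros k Hk; eapply normalized_limit_in_K; eauto).
  assert (HYsum : forall i, (i < m)%nat -> sumR p (fun k => Y k i) = s * c i)
    by (intros i Hi; eapply normalized_limit_sum; eauto).
  destruct (Rle_lt_or_eq_dec 0 s) as [Hs|Hs]; [eapply normalized_limit_scale_ge0; eauto| |].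
  - exists (fun k i => / s * Y k i). split.
    + intros k Hk. apply Hcone; [assumption|left; now apply Rinv_0_lt_compat|auto].
    + intros i Hi. rewrite sumR_scal, HYsum by assumption. field. lra.
  - exfalso. eapply (normalized_limit_nontrivial X phi Y s); eauto.
    apply Hpt; [assumption|]. intros i Hi. rewrite HYsum, <- Hs by assumption. ring.
Qed.
End MinkowskiSum.

(** * The AGE and SAGE cones *)

Section Signomials.
Variables (n m : nat) (A : nat -> nat -> R).

Definition expvec (x : nat -> R) (j : nat) : R := exp (colDot n A j x).

Lemma Sig_ext c d x : (forall j, (j < m)%nat -> c j = d j) -> Sig n m A c x = Sig n m A d x.
Proof. intros H. apply sumR_ext. intros j Hj. now rewrite H. Qed.

Lemma Sig_add c d x : Sig n m A (fun j => c j + d j) x = Sig n m A c x + Sig n m A d x.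
Proof. unfold Sig. rewrite <- sumR_add. apply sumR_ext; intros; ring. Qed.

Lemma Sig_scal a c x : Sig n m A (fun j => a * c j) x = a * Sig n m A c x.
Proof. unfold Sig. rewrite <- sumR_scal. apply sumR_ext; intros; ring. Qed.

Lemma Sig_sum p cs x :
  Sig n m A (fun j => sumR p (fun k => cs k j)) x = sumR p (fun k => Sig n m A (cs k) x).
Proof.
  unfold Sig. rewrite sumR_comm. apply sumR_ext. intros j Hj.
  rewrite Rmult_comm, <- sumR_scal. apply sumR_ext; intros; ring.
Qed.

Lemma Sig_at_0 c : Sig n m A c (fun _ => 0) = sumR m c.
Proof.
  apply sumR_ext. intros j Hj. unfold colDot. rewrite sumR_0, exp_0 by (intros; ring). ring.
Qed.

Lemma Sig_zero x : Sig n m A (fun _ => 0) x = 0.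
Proof. unfold Sig. apply sumR_0. intros; ring. Qed.

Lemma AGE_add k c d : C_AGE n m A k c -> C_AGE n m A k d -> C_AGE n m A k (fun i => c i + d i).
Proof.
  intros [Hc Hc'] [Hd Hd']. split.
  - intros x. rewrite Sig_add. specialize (Hc x). specialize (Hd x). lra.
  - intros i Hi Hik. specialize (Hc' i Hi Hik). specialize (Hd' i Hi Hik). lra.
Qed.

Lemma AGE_cone k : cone (C_AGE n m A k).
Proof.
  intros a c Ha [Hc Hc']. split.
  - intros x. rewrite Sig_scal. now apply Rmult_le_pos.
  - intros i Hi Hik. now apply Rmult_le_pos, Hc'.
Qed.

Lemma AGE_0 k : C_AGE n m A k (fun _ => 0).
Proof.
  split; [intros x; rewrite Sig_zero|intros]; lra.
Qed.

Lemma AGE_closed k : closed_set m (C_AGE n m A k).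
Proof.
  intros c Happ. split.
  - intros x. apply (approx_ge0 _ (sumR m (expvec x))).
    { apply sumR_ge0. intros; left; apply exp_pos. }
    intros eps He. destruct (Happ eps He) as [w [[Hw _] Hcw]].
    specialize (Hw x).
    replace (Sig n m A c x) with (Sig n m A w x + Sig n m A (fun j => c j - w j) x)
      by (rewrite <- Sig_add; apply Sig_ext; intros; ring).
    enough (- eps * sumR m (expvec x) <= Sig n m A (fun j => c j - w j) x) by lra.
    rewrite <- sumR_scal. apply sumR_le. intros i Hi.
    specialize (Hcw i Hi). apply Rabs_lt_iff in Hcw. pose proof (exp_pos (colDot n A i x)).
    unfold expvec. apply Rmult_le_compat_r; lra.
  - intros i Hi Hik. apply (approx_ge0 _ 1); [lra|]. intros eps He.
    destruct (Happ eps He) as [w [[_ Hw] Hcw]]. specialize (Hw i Hi Hik).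
    specialize (Hcw i Hi). apply Rabs_lt_iff in Hcw. lra.
Qed.

Lemma SAGE_NNS c : C_SAGE n m A c -> C_NNS n m A c.
Proof.
  intros [cs [Hcs Hc]] x. rewrite (Sig_ext c (fun j => sumR m (fun k => cs k j))) by assumption.
  rewrite Sig_sum. apply sumR_ge0. intros k Hk. apply (Hcs k Hk).
Qed.

Lemma SAGE_cone : cone (C_SAGE n m A).
Proof. apply (msum_cone m m). intros k _. apply AGE_cone. Qed.

Lemma SAGE_convex : convex_set (C_SAGE n m A).
Proof.
  intros u w t Hu Hw Ht. apply (msum_add m m); [intros; now apply AGE_add| |];
    apply SAGE_cone; auto; lra.
Qed.

Lemma AGE_SAGE k c : (k < m)%nat -> C_AGE n m A k c -> C_SAGE n m A c.
Proof. intros Hk. apply (msum_single m m); [assumption|intros; apply AGE_0]. Qed.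

Section DistinctColumns.
Hypothesis distinct_columns : forall j k, (j < m)%nat -> (k < m)%nat -> j <> k ->
  exists i, (i < n)%nat /\ A i j <> A i k.

Lemma colDot_along_difference i k t :
  colDot n A i (fun r => t * (A r i - A r k)) =
  colDot n A k (fun r => t * (A r i - A r k)) + t * sumR n (fun r => (A r i - A r k)²).
Proof.
  unfold colDot. rewrite <- sumR_scal, <- sumR_add. apply sumR_ext. intros; unfold Rsqr; ring.
Qed.

Lemma column_gap_pos i k : (i < m)%nat -> (k < m)%nat -> i <> k ->
  0 < sumR n (fun r => (A r i - A r k)²).
Proof.
  intros Hi Hk Hik. destruct (distinct_columns i k Hi Hk Hik) as [r [Hr HA]].
  apply Rlt_le_trans with ((A r i - A r k)²); [apply Rsqr_pos_lt; lra|].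
  apply (sumR_term_le n (fun r => (A r i - A r k)²)); [intros; apply Rle_0_sqr|assumption].
Qed.

Lemma AGE_two_terms_le k c i x : C_AGE n m A k c -> (i < m)%nat -> (k < m)%nat -> i <> k ->
  c k * expvec x k + c i * expvec x i <= Sig n m A c x.
Proof.
  intros [_ Hpos] Hi Hk Hik.
  rewrite <- (sumR_delta m k (c k * expvec x k)), <- (sumR_delta m i (c i * expvec x i)),
    <- sumR_add by assumption.
  apply sumR_le. intros j Hj. unfold expvec.
  destruct (Nat.eqb_spec j k) as [Hjk|Hjk]; destruct (Nat.eqb_spec j i) as [Hji|Hji];
    subst; [congruence|lra|lra|].
  pose proof (Hpos j Hj Hjk). pose proof (exp_pos (colDot n A j x)). nra.
Qed.

(* Along [x = t (a_i - a_k)] the term [c_i exp(a_i x)] outgrows [c_k exp(a_k x)]. *)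
Lemma AGE_vanishing k c : (k < m)%nat -> C_AGE n m A k c -> (forall x, Sig n m A c x = 0) ->
  forall i, (i < m)%nat -> c i = 0.
Proof.
  intros Hk Hc H0.
  assert (Hoff : forall i, (i < m)%nat -> i <> k -> c i = 0).
  { intros i Hi Hik. destruct (Rle_lt_or_eq_dec 0 (c i)) as [Hci|]; [now apply Hc| |auto].
    exfalso. set (g := sumR n (fun r => (A r i - A r k)²)).
    pose proof (column_gap_pos i k Hi Hk Hik) as Hg. fold g in Hg.
    set (t := (Rabs (c k) + 1) / (c i * g)).
    set (x := fun r => t * (A r i - A r k)).
    pose proof (AGE_two_terms_le k c i x Hc Hi Hk Hik) as Hlow.
    rewrite H0 in Hlow. unfold expvec, x in Hlow.
    rewrite colDot_along_difference, exp_plus in Hlow. fold g in Hlow.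
    set (E := exp (colDot n A k (fun r => t * (A r i - A r k)))) in Hlow.
    assert (HE : 0 < E) by apply exp_pos.
    assert (Hneg : c k + c i * exp (t * g) <= 0) by nra.
    pose proof (exp_ineq1_le (t * g)).
    assert (c i * (t * g) = Rabs (c k) + 1) by (unfold t; field; lra).
    assert (c i * (1 + t * g) <= c i * exp (t * g)) by (apply Rmult_le_compat_l; lra).
    pose proof (Rle_abs (- c k)). rewrite Rabs_Ropp in *. nra. }
  intros i Hi. destruct (Nat.eq_dec i k) as [->|]; [|auto].
  specialize (H0 (fun _ => 0)). now rewrite Sig_at_0, (sumR_single m k) in H0.
Qed.

Lemma AGE_pointed : pointed_family m m (C_AGE n m A).
Proof.
  intros cs Hcs Hsum k i Hk Hi. apply (AGE_vanishing k (cs k)); auto. intros x.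
  apply (sumR_ge0_eq0 m (fun k => Sig n m A (cs k) x)); [intros; now apply Hcs| |assumption].
  rewrite <- Sig_sum, (Sig_ext _ (fun _ => 0)) by assumption. apply Sig_zero.
Qed.

Theorem SAGE_closed : closed_set m (C_SAGE n m A).
Proof.
  apply (msum_closed m m (C_AGE n m A)); [intros; apply AGE_closed|intros; apply AGE_cone|].
  apply AGE_pointed.
Qed.

End DistinctColumns.

End Signomials.

(** * The closed convex hull of exp R(A^T) *)

Section ConvexHullOfExp.
Variables (n m : nat) (A : nat -> nat -> R).

Lemma expvec_conv x : conv_exp_range n m A (expvec n A x).
Proof.
  exists 1%nat, (fun _ => 1), (fun _ => x). split; [intros; lra|]. split; [simpl; ring|].
  intros j Hj. unfold expvec. simpl. ring.
Qed.

Lemma conv_cl w : conv_exp_range n m A w -> cl_conv_exp_range n m A w.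
Proof.
  intros Hw eps He. exists w. split; [assumption|]. intros. now rewrite Rminus_diag, Rabs_R0.
Qed.

Lemma conv_convex : convex_set (conv_exp_range n m A).
Proof.
  intros u w t [N1 [l1 [x1 [Hl1 [Hs1 Hu]]]]] [N2 [l2 [x2 [Hl2 [Hs2 Hw]]]]] Ht.
  exists (N1 + N2)%nat, (fun k => if Nat.ltb k N1 then (1 - t) * l1 k else t * l2 (k - N1)%nat),
    (fun k => if Nat.ltb k N1 then x1 k else x2 (k - N1)%nat).
  split; [|split].
  - intros k Hk. destruct (Nat.ltb_spec k N1); apply Rmult_le_pos; try lra; auto.
    apply Hl2. lia.
  - rewrite sumR_app.
    rewrite (sumR_ext N1 _ (fun k => (1 - t) * l1 k)).
    2: { intros k Hk. destruct (Nat.ltb_spec k N1); [reflexivity|lia]. }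
    rewrite (sumR_ext N2 _ (fun k => t * l2 k)).
    2: { intros k Hk. destruct (Nat.ltb_spec (N1 + k) N1); [lia|].
         now replace (N1 + k - N1)%nat with k by lia. }
    rewrite !sumR_scal, Hs1, Hs2. ring.
  - intros j Hj. rewrite sumR_app.
    rewrite (sumR_ext N1 _ (fun k => (1 - t) * (l1 k * exp (colDot n A j (x1 k))))).
    2: { intros k Hk. destruct (Nat.ltb_spec k N1); [ring|lia]. }
    rewrite (sumR_ext N2 _ (fun k => t * (l2 k * exp (colDot n A j (x2 k))))).
    2: { intros k Hk. destruct (Nat.ltb_spec (N1 + k) N1); [lia|].
         replace (N1 + k - N1)%nat with k by lia. ring. }
    rewrite !sumR_scal, Hu, Hw by assumption. ring.
Qed.

Lemma cl_conv_convex : convex_set (cl_conv_exp_range n m A).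
Proof.
  intros u w t Hu Hw Ht eps He.
  destruct (Hu (eps / 2) ltac:(lra)) as [u' [Hu' Huu]].
  destruct (Hw (eps / 2) ltac:(lra)) as [w' [Hw' Hww]].
  exists (fun i => (1 - t) * u' i + t * w' i). split; [now apply conv_convex|].
  intros j Hj. specialize (Huu j Hj). specialize (Hww j Hj).
  replace ((1 - t) * u j + t * w j - ((1 - t) * u' j + t * w' j))
    with ((1 - t) * (u j - u' j) + t * (w j - w' j)) by ring.
  eapply Rle_lt_trans; [apply Rabs_triang|].
  rewrite !Rabs_mult, (Rabs_pos_eq (1 - t)), (Rabs_pos_eq t) by lra.
  assert ((1 - t) * Rabs (u j - u' j) <= (1 - t) * (eps / 2)) by (apply Rmult_le_compat_l; lra).
  assert (t * Rabs (w j - w' j) <= t * (eps / 2)) by (apply Rmult_le_compat_l; lra).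
  lra.
Qed.

Lemma cl_conv_closed : closed_set m (cl_conv_exp_range n m A).
Proof.
  intros v Hv eps He. destruct (Hv (eps / 2) ltac:(lra)) as [w [Hw Hvw]].
  destruct (Hw (eps / 2) ltac:(lra)) as [u [Hu Hwu]]. exists u. split; [assumption|].
  intros j Hj. specialize (Hvw j Hj). specialize (Hwu j Hj).
  apply Rabs_lt_iff in Hvw, Hwu. apply Rabs_lt_iff. lra.
Qed.

Lemma conv_dual_NNS w c : conv_exp_range n m A w -> C_NNS n m A c -> 0 <= dot m w c.
Proof.
  intros [N [l [xs [Hl [_ Hw]]]]] Hc. unfold dot.
  rewrite (sumR_ext m _ (fun i => sumR N (fun k => l k * (c i * exp (colDot n A i (xs k)))))).
  - rewrite sumR_comm. apply sumR_ge0. intros k Hk. rewrite sumR_scal.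
    apply Rmult_le_pos; [now apply Hl|apply Hc].
  - intros i Hi. rewrite Hw, Rmult_comm, <- sumR_scal by assumption.
    apply sumR_ext; intros; ring.
Qed.

Lemma cl_conv_dual_NNS v c : cl_conv_exp_range n m A v -> C_NNS n m A c -> 0 <= dot m v c.
Proof.
  intros Hv Hc. apply (approx_ge0 _ (sumR m (fun i => Rabs (c i)))).
  { apply sumR_ge0; intros; apply Rabs_pos. }
  intros eps He. destruct (Hv eps He) as [w [Hw Hvw]].
  pose proof (conv_dual_NNS w c Hw Hc).
  replace (dot m v c) with (dot m w c + dot m (fun i => v i - w i) c)
    by (unfold dot; rewrite <- sumR_add; apply sumR_ext; intros; ring).
  enough (- eps * sumR m (fun i => Rabs (c i)) <= dot m (fun i => v i - w i) c) by lra.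
  rewrite <- sumR_scal. apply sumR_le. intros i Hi. specialize (Hvw i Hi).
  pose proof (Rle_abs (- ((v i - w i) * c i))) as Habs. rewrite Rabs_Ropp, Rabs_mult in Habs.
  assert (Rabs (v i - w i) * Rabs (c i) <= eps * Rabs (c i))
    by (apply Rmult_le_compat_r; [apply Rabs_pos|lra]).
  lra.
Qed.

End ConvexHullOfExp.

Section Equivalences.
Variables (n m : nat) (A : nat -> nat -> R).
Hypothesis m_pos : (0 < m)%nat.
Hypothesis first_column_zero : forall i, (i < n)%nat -> A i 0%nat = 0.

Lemma sumR_mul_e1 v : sumR m (fun i => v i * e1 i) = v 0%nat.
Proof.
  rewrite (sumR_single m 0); [unfold e1; simpl; ring|assumption|].
  intros i _ Hi. unfold e1. destruct (Nat.eqb_spec i 0); [lia|ring].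
Qed.

Lemma Sig_e1 x : Sig n m A e1 x = 1.
Proof.
  unfold Sig.
  rewrite (sumR_ext m _ (fun j => expvec n A x j * e1 j)) by (intros; unfold expvec; ring).
  rewrite sumR_mul_e1. unfold expvec, colDot.
  rewrite sumR_0, exp_0 by (intros i Hi; rewrite first_column_zero by assumption; ring).
  reflexivity.
Qed.

Lemma Sig_sub_e1 c g x : Sig n m A (fun i => c i - g * e1 i) x = Sig n m A c x - g.
Proof.
  rewrite (Sig_ext n m A _ (fun i => c i + (- g) * e1 i)) by (intros; ring).
  rewrite Sig_add, Sig_scal, Sig_e1. ring.
Qed.

Lemma NNS_sub_e1_iff c g : C_NNS n m A (fun i => c i - g * e1 i) <-> forall x, g <= Sig n m A c x.
Proof. split; intros H x; specialize (H x); rewrite Sig_sub_e1 in *; lra. Qed.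

Lemma e1_SAGE : C_SAGE n m A e1.
Proof.
  apply (AGE_SAGE n m A 0); [assumption|split].
  - intros x. rewrite Sig_e1. lra.
  - intros i _ _. unfold e1. destruct (Nat.eqb i 0); lra.
Qed.

Lemma SAGE_add_e1 c a : 0 <= a -> C_SAGE n m A c -> C_SAGE n m A (fun i => c i + a * e1 i).
Proof.
  intros Ha Hc. apply (msum_add m m); [intros; now apply AGE_add|assumption|].
  now apply SAGE_cone, e1_SAGE.
Qed.

Hypothesis distinct_columns : forall j k, (j < m)%nat -> (k < m)%nat -> j <> k ->
  exists i, (i < n)%nat /\ A i j <> A i k.

(* The supremum defining [f_SAGE] need not be attained; closedness of [C_SAGE] makes up for it. *)
Lemma NNS_SAGE_of_exact_SAGE_bound :
  (forall c, exists v, f_star_is n m A c v /\ f_SAGE_is n m A c v) ->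
  forall c, C_NNS n m A c <-> C_SAGE n m A c.
Proof.
  intros Hexact c. split; [|apply SAGE_NNS]. intros Hc.
  destruct (Hexact c) as [[l| |] [Hstar Hsage]]; simpl in Hstar, Hsage.
  - assert (Hl : 0 <= l) by (apply Hstar; intros y [x ->]; apply Hc).
    apply (SAGE_closed n m A distinct_columns). intros eps He.
    destruct (lub_approx _ l (eps / 2) Hsage ltac:(lra)) as [g [Hg Hgl]].
    exists (fun i => c i + eps / 2 * e1 i). split.
    + replace (fun i => c i + eps / 2 * e1 i)
        with (fun i => (c i - g * e1 i) + (g + eps / 2) * e1 i)
        by (apply functional_extensionality; intros; ring).
      apply SAGE_add_e1; [lra|assumption].
    + intros i _. replace (c i - (c i + eps / 2 * e1 i)) with (- (eps / 2 * e1 i)) by ring.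
      rewrite Rabs_Ropp. unfold e1. destruct (Nat.eqb i 0); rewrite ?Rmult_1_r, ?Rmult_0_r;
        [rewrite Rabs_pos_eq|rewrite Rabs_R0]; lra.
  - exfalso. apply (Hstar (Sig n m A c (fun _ => 0))). now exists (fun _ => 0).
  - destruct (Hstar 0) as [y [[x ->] Hy]]. specialize (Hc x). lra.
Qed.

Lemma exact_SAGE_bound_of_NNS_SAGE :
  (forall c, C_NNS n m A c <-> C_SAGE n m A c) ->
  forall c, exists v, f_star_is n m A c v /\ f_SAGE_is n m A c v.
Proof.
  intros Heq c.
  assert (Hshift : forall g,
      C_SAGE n m A (fun i => c i - g * e1 i) <-> forall x, g <= Sig n m A c x)
    by (intros g; rewrite <- Heq; apply NNS_sub_e1_iff).
  destruct (classic (exists b, forall x, b <= Sig n m A c x)) as [Hb|Hnb].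
  - destruct (glb_exists (fun y => exists x, y = Sig n m A c x)) as [l [Hl1 Hl2]].
    { now exists (Sig n m A c (fun _ => 0)), (fun _ => 0). }
    { destruct Hb as [b Hb]. exists b. intros y [x ->]. apply Hb. }
    exists (Fin l). split; [now split|]. split.
    + intros g Hg. apply Hl2. intros y [x ->]. now apply Hshift.
    + intros b Hub. apply Hub, Hshift. intros x. apply Hl1. now exists x.
  - exists MInf. split; simpl.
    + intros M. apply NNPP. intros Hno. apply Hnb. exists M. intros x.
      apply Rnot_lt_le. intros Hlt. apply Hno.
      exists (Sig n m A c x). split; [now exists x|assumption].
    + intros g Hg. apply Hnb. exists g. now apply Hshift.
Qed.

Lemma SAGE_dual_in_cl_conv_of_NNS_SAGE :
  (forall c, C_NNS n m A c <-> C_SAGE n m A c) ->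
  forall v, C_SAGE_dual n m A v -> v 0%nat = 1 -> cl_conv_exp_range n m A v.
Proof.
  intros Heq v Hv Hv0. apply NNPP. intros Hncl.
  destruct (separation m _ (cl_conv_closed n m A) (cl_conv_convex n m A) v
    (ex_intro _ _ (conv_cl n m A _ (expvec_conv n m A (fun _ => 0)))) Hncl) as [y [d [Hd Hsep]]].
  set (t := dot m y v + d).
  assert (Hc : C_SAGE n m A (fun i => y i - t * e1 i)).
  { apply Heq, NNS_sub_e1_iff. intros x.
    exact (Hsep _ (conv_cl n m A _ (expvec_conv n m A x))). }
  specialize (Hv _ Hc).
  rewrite (sumR_ext m _ (fun i => y i * v i + (- t) * (v i * e1 i))) in Hv by (intros; ring).
  rewrite sumR_add, sumR_scal, sumR_mul_e1, Hv0 in Hv. fold (dot m y v) in Hv.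
  unfold t in Hv. lra.
Qed.

(* Perturbing the separating functional [y] by [eta (1,...,1)] keeps it in the dual cone,
   because [sum s = Sig s 0 >= 0], and makes its first entry positive for normalisation. *)
Lemma NNS_SAGE_of_SAGE_dual_in_cl_conv :
  (forall v, C_SAGE_dual n m A v -> v 0%nat = 1 -> cl_conv_exp_range n m A v) ->
  forall c, C_NNS n m A c <-> C_SAGE n m A c.
Proof.
  intros Hcl c. split; [|apply SAGE_NNS]. intros Hc. apply NNPP. intros Hns.
  destruct (cone_separation m _ (SAGE_closed n m A distinct_columns) (SAGE_convex n m A) c
    (SAGE_cone n m A) (ex_intro _ _ e1_SAGE) Hns) as [y [Hy Hyc]].
  assert (Hy0 : 0 <= y 0%nat) by (rewrite <- sumR_mul_e1; exact (Hy _ e1_SAGE)).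
  set (eta := - dot m y c / (2 * (Rabs (sumR m c) + 1))).
  assert (Heta : 0 < eta) by (apply Rdiv_lt_0_compat; [|pose proof (Rabs_pos (sumR m c))]; lra).
  set (a := y 0%nat + eta).
  assert (Hperturb : forall s,
      dot m (fun i => (y i + eta) / a) s = / a * (dot m y s + eta * sumR m s)).
  { intros s. unfold dot. rewrite <- (sumR_scal m eta), <- sumR_add, <- sumR_scal.
    apply sumR_ext. intros; field. unfold a; lra. }
  assert (Hdual : C_SAGE_dual n m A (fun i => (y i + eta) / a)).
  { intros s Hs. change (0 <= dot m (fun i => (y i + eta) / a) s). rewrite Hperturb.
    pose proof (Hy s Hs). pose proof (SAGE_NNS n m A s Hs (fun _ => 0)) as Hsum.
    rewrite Sig_at_0 in Hsum.
    apply Rmult_le_pos; [left; apply Rinv_0_lt_compat; unfold a; lra|nra]. }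
  pose proof (cl_conv_dual_NNS n m A _ c (Hcl _ Hdual ltac:(unfold a; field; lra)) Hc) as Hvc.
  rewrite Hperturb in Hvc.
  assert (eta * sumR m c < - dot m y c).
  { pose proof (Rle_abs (sumR m c)). pose proof (Rabs_pos (sumR m c)).
    apply Rle_lt_trans with (eta * Rabs (sumR m c)); [apply Rmult_le_compat_l; lra|].
    unfold eta. apply (Rmult_lt_reg_r (2 * (Rabs (sumR m c) + 1))); [lra|].
    field_simplify; nra. }
  assert (0 < / a) by (apply Rinv_0_lt_compat; unfold a; lra). nra.
Qed.

End Equivalences.

Theorem mainTheorem19 (n m : nat) (A : nat -> nat -> R)
  (Hm : (0 < m)%nat)
  (Hdistinct : forall j k, (j < m)%nat -> (k < m)%nat -> j <> k ->
                 exists i, (i < n)%nat /\ A i j <> A i k)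
  (Ha1 : forall i, (i < n)%nat -> A i 0%nat = 0) :
  ((forall c : nat -> R, exists v : ExtR, f_star_is n m A c v /\ f_SAGE_is n m A c v)
   <-> (forall c : nat -> R, C_NNS n m A c <-> C_SAGE n m A c))
  /\
  ((forall c : nat -> R, C_NNS n m A c <-> C_SAGE n m A c)
   <-> (forall v : nat -> R, C_SAGE_dual n m A v -> v 0%nat = 1 ->
          cl_conv_exp_range n m A v)).
Proof.
  split; split.
  - apply (NNS_SAGE_of_exact_SAGE_bound n m A Hm Ha1 Hdistinct).
  - apply (exact_SAGE_bound_of_NNS_SAGE n m A Hm Ha1).
  - apply (SAGE_dual_in_cl_conv_of_NNS_SAGE n m A Hm Ha1).
  - apply (NNS_SAGE_of_SAGE_dual_in_cl_conv n m A Hm Ha1 Hdistinct).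
Qed.
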